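(* Let $(X,\le)$ be a poset and $E$ an equivalence relation on $X$ with ${\le}\subseteq E$. Let $\alpha:X\to X$ be an order automorphism of $(X,\le)$ and $\beta:X\to X$ a self-inverse dual order automorphism of $(X,\le)$ such that $\alpha,\beta\subseteq E$ and $\beta=\alpha\circ\beta\circ\alpha$. Then for all $n\in\omega$: (i) $\alpha^n\circ\beta$ and $\beta\circ\alpha^n$ are dual order automorphisms of $(X,\le)$; (ii) $\alpha^n\circ\beta\subseteq E$ and $\beta\circ\alpha^n\subseteq E$; (iii) $\alpha^n\circ\beta$ and $\beta\circ\alpha^n$ are self-inverse; (iv) $\alpha\circ(\alpha^n\circ\beta)\circ\alpha=\alpha^n\circ\beta$ and $\alpha\circ(\beta\circ\alpha^n)\circ\alpha=\beta\circ\alpha^n$.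
   Context: Functions $X\to X$ are identified with their graphs $\{(x,\gamma(x))\}$ and composed as relations: $R\circ S=\{(x,y)\mid\exists z\,((x,z)\in R,(z,y)\in S)\}$; $\alpha^0=\mathrm{id}_X$, $\alpha^{k+1}=\alpha^k\circ\alpha$. Order automorphism: bijection with $x\le y\iff\alpha(x)\le\alpha(y)$; dual order automorphism: bijection with $x\le y\iff\beta(y)\le\beta(x)$; self-inverse: $\gamma\circ\gamma=\mathrm{id}_X$. *)

(* Functions are identified with their graphs and composed as relations:
   R o S = {(x,y) | exists z, (x,z) in R, (z,y) in S}.  For graphs of
   functions this is diagrammatic composition: first f, then g. *)
Definition rcomp {X : Type} (f g : X -> X) : X -> X := fun x => g (f x).

Fixpoint fpow {X : Type} (f : X -> X) (n : nat) : X -> X :=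
  match n with
  | O => fun x => x
  | S k => rcomp (fpow f k) f
  end.

(* equality of graphs of functions = pointwise equality *)
Definition feq {X : Type} (f g : X -> X) : Prop := forall x, f x = g x.

Definition is_poset {X : Type} (le : X -> X -> Prop) : Prop :=
  (forall x, le x x) /\
  (forall x y, le x y -> le y x -> x = y) /\
  (forall x y z, le x y -> le y z -> le x z).

Definition is_equivalence {X : Type} (E : X -> X -> Prop) : Prop :=
  (forall x, E x x) /\
  (forall x y, E x y -> E y x) /\
  (forall x y z, E x y -> E y z -> E x z).

Definition rel_sub {X : Type} (R E : X -> X -> Prop) : Prop :=
  forall x y, R x y -> E x y.

(* graph of f is a subset of E *)
Definition fun_sub {X : Type} (f : X -> X) (E : X -> X -> Prop) : Prop :=
  forall x, E x (f x).

Definition is_bijection {X : Type} (f : X -> X) : Prop :=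
  (forall x y, f x = f y -> x = y) /\ (forall y, exists x, f x = y).

Definition order_aut {X : Type} (le : X -> X -> Prop) (f : X -> X) : Prop :=
  is_bijection f /\ (forall x y, le x y <-> le (f x) (f y)).

Definition dual_order_aut {X : Type} (le : X -> X -> Prop) (f : X -> X) : Prop :=
  is_bijection f /\ (forall x y, le x y <-> le (f y) (f x)).

Definition self_inverse {X : Type} (f : X -> X) : Prop :=
  feq (rcomp f f) (fun x => x).

(* Order automorphisms and dual order automorphisms compose like the signs
   +1 and -1, and graphs contained in a transitive relation E compose inside
   E; this gives (i) and (ii), without using the poset axioms or le ⊆ E.
   By induction, beta = alpha beta alpha yields beta = alpha^n beta alpha^n,
   from which (iii) follows since beta is self-inverse; (iv) follows because
   alpha commutes with its powers. *)

From Stdlib Require Import Setoid.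

Section Composition.

Variables (X : Type) (le : X -> X -> Prop).

Lemma bijection_id : is_bijection (fun x : X => x).
Proof.
  split; [intros x y Hxy; exact Hxy | intros y; exists y; reflexivity].
Qed.

Lemma bijection_rcomp (f g : X -> X) :
  is_bijection f -> is_bijection g -> is_bijection (rcomp f g).
Proof.
  intros [Hf_inj Hf_surj] [Hg_inj Hg_surj]; unfold rcomp; split.
  - intros x y Hxy. apply Hf_inj, Hg_inj, Hxy.
  - intros z. destruct (Hg_surj z) as [y Hy]. destruct (Hf_surj y) as [x Hx].
    exists x. rewrite Hx. exact Hy.
Qed.

Lemma order_aut_id : order_aut le (fun x => x).
Proof. split; [apply bijection_id | tauto]. Qed.

Lemma order_aut_rcomp (f g : X -> X) :
  order_aut le f -> order_aut le g -> order_aut le (rcomp f g).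
Proof.
  intros [Bf Hf] [Bg Hg]; split; [apply bijection_rcomp; assumption |].
  intros x y; unfold rcomp. rewrite Hf. apply Hg.
Qed.

Lemma order_aut_fpow (f : X -> X) (n : nat) :
  order_aut le f -> order_aut le (fpow f n).
Proof.
  intros Hf; induction n as [|n IH]; simpl.
  - apply order_aut_id.
  - apply order_aut_rcomp; assumption.
Qed.

Lemma dual_order_aut_rcomp_l (f g : X -> X) :
  order_aut le f -> dual_order_aut le g -> dual_order_aut le (rcomp f g).
Proof.
  intros [Bf Hf] [Bg Hg]; split; [apply bijection_rcomp; assumption |].
  intros x y; unfold rcomp. rewrite Hf. apply Hg.
Qed.

Lemma dual_order_aut_rcomp_r (f g : X -> X) :
  dual_order_aut le f -> order_aut le g -> dual_order_aut le (rcomp f g).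
Proof.
  intros [Bf Hf] [Bg Hg]; split; [apply bijection_rcomp; assumption |].
  intros x y; unfold rcomp. rewrite Hf. apply Hg.
Qed.

End Composition.

Section Equivalence.

Variables (X : Type) (E : X -> X -> Prop).
Hypothesis HE : is_equivalence E.

Lemma fun_sub_rcomp (f g : X -> X) :
  fun_sub f E -> fun_sub g E -> fun_sub (rcomp f g) E.
Proof.
  destruct HE as [_ [_ E_trans]]; intros Hf Hg x; unfold rcomp.
  apply E_trans with (f x); [apply Hf | apply Hg].
Qed.

Lemma fun_sub_fpow (f : X -> X) (n : nat) : fun_sub f E -> fun_sub (fpow f n) E.
Proof.
  destruct HE as [E_refl _]; intros Hf; induction n as [|n IH]; simpl.
  - intros x; apply E_refl.
  - apply fun_sub_rcomp; assumption.
Qed.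

End Equivalence.

Section Sandwich.

Variables (X : Type) (a b : X -> X).

Lemma fpow_comm (n : nat) (x : X) : fpow a n (a x) = a (fpow a n x).
Proof.
  induction n as [|n IH]; simpl; unfold rcomp; [reflexivity | now rewrite IH].
Qed.

Lemma sandwich_fpow (n : nat) :
  feq b (rcomp (rcomp a b) a) -> feq b (rcomp (rcomp (fpow a n) b) (fpow a n)).
Proof.
  unfold feq, rcomp; intros Hab; induction n as [|n IH]; intros x; simpl;
    unfold rcomp; [reflexivity |].
  rewrite <- fpow_comm, <- Hab. apply IH.
Qed.

Variable c : X -> X.
Hypothesis Hcb : feq b (rcomp (rcomp c b) c).

Lemma self_inverse_rcomp_l : self_inverse b -> self_inverse (rcomp c b).
Proof.
  unfold self_inverse, feq, rcomp in *; intros Hb x. now rewrite <- Hcb.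
Qed.

Lemma self_inverse_rcomp_r : self_inverse b -> self_inverse (rcomp b c).
Proof.
  unfold self_inverse, feq, rcomp in *; intros Hb x. now rewrite <- Hcb.
Qed.

Hypothesis Hab : feq b (rcomp (rcomp a b) a).
Hypothesis Hac : forall x, c (a x) = a (c x).

Lemma sandwich_rcomp_l : feq (rcomp (rcomp a (rcomp c b)) a) (rcomp c b).
Proof. unfold feq, rcomp in *; intros x. now rewrite Hac, <- Hab. Qed.

Lemma sandwich_rcomp_r : feq (rcomp (rcomp a (rcomp b c)) a) (rcomp b c).
Proof. unfold feq, rcomp in *; intros x. now rewrite <- Hac, <- Hab. Qed.

End Sandwich.

Theorem lemma3p19 (X : Type) (le E : X -> X -> Prop) (alpha beta : X -> X) :
  is_poset le ->
  is_equivalence E ->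
  rel_sub le E ->
  order_aut le alpha ->
  dual_order_aut le beta ->
  self_inverse beta ->
  fun_sub alpha E ->
  fun_sub beta E ->
  feq beta (rcomp (rcomp alpha beta) alpha) ->
  forall n : nat,
    (dual_order_aut le (rcomp (fpow alpha n) beta) /\
     dual_order_aut le (rcomp beta (fpow alpha n))) /\
    (fun_sub (rcomp (fpow alpha n) beta) E /\
     fun_sub (rcomp beta (fpow alpha n)) E) /\
    (self_inverse (rcomp (fpow alpha n) beta) /\
     self_inverse (rcomp beta (fpow alpha n))) /\
    (feq (rcomp (rcomp alpha (rcomp (fpow alpha n) beta)) alpha)
         (rcomp (fpow alpha n) beta) /\
     feq (rcomp (rcomp alpha (rcomp beta (fpow alpha n))) alpha)
         (rcomp beta (fpow alpha n))).
Proof.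
  intros _ HE _ Ha Hb Hb_inv HaE HbE Hab n.
  pose proof (order_aut_fpow X le alpha n Ha) as Han.
  pose proof (fun_sub_fpow X E HE alpha n HaE) as HanE.
  pose proof (sandwich_fpow X alpha beta n Hab) as Hsandwich.
  pose proof (fpow_comm X alpha n) as Hcomm.
  split; [split | split; [split | split; split]].
  - apply dual_order_aut_rcomp_l; assumption.
  - apply dual_order_aut_rcomp_r; assumption.
  - apply fun_sub_rcomp; assumption.
  - apply fun_sub_rcomp; assumption.
  - apply self_inverse_rcomp_l; assumption.
  - apply self_inverse_rcomp_r; assumption.
  - apply sandwich_rcomp_l; assumption.
  - apply sandwich_rcomp_r; assumption.
Qed.
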